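(* Let $r,d,d_1\in\mathbb{N}$, $s_i\in\mathbb{N}$ for $i\in[r]$. Let $\mathcal{A}=\{\mathbf{a}^1,\dots,\mathbf{a}^r\}\subseteq\mathbb{Z}^d$ be linearly independent with some $\overline{\omega}\in\mathbb{Q}^d$ satisfying $\overline{\omega}\cdot\mathbf{a}^i=1$ for all $i$, and let $\mathcal{B}=\{\mathbf{b}^i_j:i\in[r],j\in[s_i]\}\subseteq\mathbb{Z}^{d_1}$ be a point configuration with a linear map $\pi_1:\mathbb{Z}^{d_1}\to\mathbb{Z}^d$ such that $\pi_1(\mathbf{b}^i_j)=\mathbf{a}^i$ for all $i,j$. Let $w$ be positive weights on $\mathcal{B}$ such that $(\mathcal{B},w)$ has rational linear precision, with blending functions $\{\beta^i_j\}$ satisfying the definition of rational linear precision, and let $P=\operatorname{conv}(\mathcal{B})$. For $i\in[r]$ let $P^i=\operatorname{conv}\{\mathbf{b}^i_j: j\in[s_i]\}$. Then for all $\mathbf{p}\in P^i$, \[\sum_{j\in[s_i]}\beta^i_j(\mathbf{p})=1.\]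
   Context: Scaled projective toric variety: for a finite point configuration $\mathcal{S}\subseteq\mathbb{Z}^n$ with positive weights $w=(w_{\mathbf{s}})$, $X_{\mathcal{S},w}$ is the Zariski closure of the image of $(\mathbb{C}^* )^n\to\mathbb{P}^{|\mathcal{S}|-1}$, $\mathbf{t}\mapsto[w_{\mathbf{s}}\mathbf{t}^{\mathbf{s}}]_{\mathbf{s}\in\mathcal{S}}$ (a row of ones is appended to the matrix of points if the all-ones vector is not in its row span). Rational linear precision: $(\mathcal{S},w)$, with $\Pi=\operatorname{conv}(\mathcal{S})$, has rational linear precision if there are rational functions $\{\hat\beta_{\mathbf{s}}\}_{\mathbf{s}\in\mathcal{S}}$ on $\mathbb{C}^n$ (blending functions) such that (1) $\sum_{\mathbf{s}}\hat\beta_{\mathbf{s}}=1$; (2) $(\hat\beta_{\mathbf{s}})_{\mathbf{s}}:\mathbb{C}^n\dashrightarrow X_{\mathcal{S},w}$ is a rational parametrization of $X_{\mathcal{S},w}$; (3) for every $\mathbf{p}$ in the relative interior of $\Pi$, each $\hat\beta_{\mathbf{s}}(\mathbf{p})$ is defined and a nonnegative real number; (4) $\sum_{\mathbf{s}}\hat\beta_{\mathbf{s}}(\mathbf{p})\,\mathbf{s}=\mathbf{p}$ for all $\mathbf{p}\in\Pi$. *)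

From HB Require Import structures.
From mathcomp Require Import all_boot all_order all_algebra.
From mathcomp Require Import complex.
From mathcomp Require Import mpoly.

Set Implicit Arguments.
Unset Strict Implicit.
Unset Printing Implicit Defensive.

Import Order.TTheory GRing.Theory Num.Theory.
Local Open Scope ring_scope.

(* A rational function is represented by a numerator/denominator pair of    *)
(* polynomials (denominator nonzero); two pairs represent the same rational *)
(* function when they are cross-multiplication equal.                       *)

Record ratfun (R : rcfType) (n : nat) :=
  RatFun { rf_num : {mpoly R[i][n]}; rf_den : {mpoly R[i][n]} }.

Definition rf_wf (R : rcfType) (n : nat) (f : ratfun R n) : Prop :=
  rf_den f != 0.

Definition rf_eq (R : rcfType) (n : nat) (f g : ratfun R n) : Prop :=
  rf_num f * rf_den g = rf_num g * rf_den f.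

Definition rf_add (R : rcfType) (n : nat) (f g : ratfun R n) : ratfun R n :=
  RatFun (rf_num f * rf_den g + rf_num g * rf_den f) (rf_den f * rf_den g).

Definition rf_zero (R : rcfType) (n : nat) : ratfun R n := RatFun 0 1.
Definition rf_one (R : rcfType) (n : nat) : ratfun R n := RatFun 1 1.

(* [rf_value f x v] : the rational function f is defined (regular) at the
   point x of C^n and its value there is v, i.e. f admits a representative
   a/b with b(x) <> 0 and v = a(x)/b(x). *)
Definition rf_value (R : rcfType) (n : nat) (f : ratfun R n)
    (x : 'I_n -> R[i]) (v : R[i]) : Prop :=
  exists (a b : {mpoly R[i][n]}),
    [/\ b != 0, a * rf_den f = rf_num f * b, b.@[x] != 0 & v = a.@[x] / b.@[x]].

Definition intpt (R : rcfType) (n : nat) (s : 'rV[int]_n) : 'rV[R]_n :=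
  map_mx (fun z : int => z%:~R) s.

Definition realpt (R : rcfType) (n : nat) (p : 'rV[R]_n) : 'I_n -> R[i] :=
  fun k => (p 0 k)%:C%C.

Definition in_conv (R : rcfType) (n : nat) (I : finType) (S : I -> 'rV[R]_n)
    (p : 'rV[R]_n) : Prop :=
  exists lam : I -> R,
    [/\ forall t, 0 <= lam t, \sum_t lam t = 1 & p = \sum_t lam t *: S t].

Definition in_aff (R : rcfType) (n : nat) (I : finType) (S : I -> 'rV[R]_n)
    (q : 'rV[R]_n) : Prop :=
  exists lam : I -> R, \sum_t lam t = 1 /\ q = \sum_t lam t *: S t.

Definition in_relint (R : rcfType) (n : nat) (I : finType) (S : I -> 'rV[R]_n)
    (p : 'rV[R]_n) : Prop :=
  in_conv S p /\
  exists e : R, 0 < e /\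
    forall q, in_aff S q -> (forall k, `|q 0 k - p 0 k| < e) -> in_conv S q.

(* The scaled projective toric variety X_{S,w} in P^{|S|-1}.                *)
(* Homogeneous coordinates are indexed by T (the index type of the point    *)
(* configuration, injectively indexed); polynomials on C^{|T|} are          *)
(* {mpoly R[i][#|T|]} and coordinate k corresponds to enum_val k.           *)
(* The Zariski closure of the image of the torus in P^{|S|-1} is described  *)
(* by its ideal: the polynomials vanishing on the affine cone over the      *)
(* image.  A rational map into X is a rational parametrization of X iff the *)
(* Zariski closure of its image equals X, i.e. iff a polynomial vanishes on *)
(* the cone over its image exactly when it vanishes on the cone over the    *)
(* torus image.                                                             *)

Definition coords (R : rcfType) (T : finType) (x : T -> R[i]) : 'I_#|T| -> R[i] :=
  fun k => x (enum_val k).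

(* the point  lam * (w_s t^s)_s  of the affine cone over the torus image *)
Definition toric_pt (R : rcfType) (n : nat) (T : finType) (S : T -> 'rV[int]_n)
    (w : T -> R) (lam : R[i]) (t : 'I_n -> R[i]) : T -> R[i] :=
  fun s => lam * (w s)%:C%C * \prod_(k < n) t k ^ (S s 0 k).

Definition vanishes_on_toric (R : rcfType) (n : nat) (T : finType)
    (S : T -> 'rV[int]_n) (w : T -> R) (f : {mpoly R[i][#|T|]}) : Prop :=
  forall (lam : R[i]) (t : 'I_n -> R[i]),
    lam != 0 -> (forall k, t k != 0) -> f.@[coords (toric_pt S w lam t)] = 0.

Definition vanishes_on_image (R : rcfType) (n : nat) (T : finType)
    (beta : T -> ratfun R n) (f : {mpoly R[i][#|T|]}) : Prop :=
  forall (lam : R[i]) (x : 'I_n -> R[i]) (v : T -> R[i]),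
    lam != 0 -> (forall s, rf_value (beta s) x (v s)) ->
    f.@[coords (fun s => lam * v s)] = 0.

Definition rational_parametrization (R : rcfType) (n : nat) (T : finType)
    (S : T -> 'rV[int]_n) (w : T -> R) (beta : T -> ratfun R n) : Prop :=
  forall f : {mpoly R[i][#|T|]},
    vanishes_on_toric S w f <-> vanishes_on_image beta f.

(* S is a point configuration injectively indexed by the finite type T.     *)

Definition has_RLP (R : rcfType) (n : nat) (T : finType)
    (S : T -> 'rV[int]_n) (w : T -> R) (beta : T -> ratfun R n) : Prop :=
  [/\
      forall s, rf_wf (beta s),
      rf_eq (\big[@rf_add R n/rf_zero R n]_s beta s) (rf_one R n),
      rational_parametrization S w beta,
      (forall p : 'rV[R]_n, in_relint (fun s => intpt R (S s)) p ->
         forall s, exists x : R, 0 <= x /\ rf_value (beta s) (realpt p) (x%:C%C))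
    &
      (forall p : 'rV[R]_n, in_conv (fun s => intpt R (S s)) p ->
         exists v : T -> R[i],
           (forall s, rf_value (beta s) (realpt p) (v s)) /\
           (forall k, \sum_s v s * ((S s 0 k)%:~R) = realpt p k))].

(* A point p of P^i lies in P, so linear precision gives p = sum_x beta_x(p) b_x.
   Applying pi_1, which is constant equal to a^i on P^i, yields
   sum_i' (sum_j beta^i'_j(p)) a^i' = a^i, and linear independence of the a^i'
   (over Q, hence over C) forces the coefficient of a^i to be 1. *)
From HB Require Import structures.
From mathcomp Require Import all_boot all_order all_algebra.
From mathcomp Require Import complex.
From mathcomp Require Import mpoly.

Import Order.TTheory GRing.Theory Num.Theory.
Local Open Scope ring_scope.

Lemma in_conv_comp {R : rcfType} {n : nat} {I J : finType} {S : I -> 'rV[R]_n}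
    {f : J -> I} {p : 'rV[R]_n} :
  in_conv (S \o f) p -> in_conv S p.
Proof.
case=> lam [lam_ge0 lam_sum1 ->].
exists (fun x => \sum_(j | f j == x) lam j); split.
- by move=> x; apply: sumr_ge0 => j _; apply: lam_ge0.
- by rewrite -lam_sum1 (partition_big f xpredT).
- rewrite (partition_big f xpredT) //=; apply: eq_bigr => x _.
  by rewrite scaler_suml; apply: eq_bigr => j /eqP <-.
Qed.

Lemma in_conv_mulmx {R : rcfType} {n m : nat} {I : finType} {S : I -> 'rV[R]_n}
    {M : 'M[R]_(n, m)} {q : 'rV[R]_m} {p : 'rV[R]_n} :
  in_conv S p -> (forall t, S t *m M = q) -> p *m M = q.
Proof.
case=> lam [_ lam_sum1 ->] SM.
rewrite mulmx_suml (eq_bigr (fun t => lam t *: q)) => [|t _]; last first.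
  by rewrite -scalemxAl SM.
by rewrite -scaler_suml lam_sum1 scale1r.
Qed.

Lemma row_free_indep (F : fieldType) (m n : nat) (A : 'M[F]_(m, n)) :
  (forall c : 'I_m -> F, \sum_i c i *: row i A = 0 -> forall i, c i = 0) ->
  row_free A.
Proof.
move=> indep; rewrite -kermx_eq0; apply/eqP/row_matrixP => k; rewrite row0.
apply/rowP => j; rewrite [RHS]mxE; move: j; apply: indep.
by rewrite -mulmx_sum_row -row_mul mulmx_ker row0.
Qed.

Lemma row_free_coef_eq1 {F : fieldType} {m n : nat} {A : 'M[F]_(m, n)}
    {c : 'I_m -> F} {k : 'I_m} :
  row_free A -> \sum_i c i *: row i A = row k A -> c k = 1.
Proof.
move=> freeA comb; apply/eqP; rewrite -subr_eq0; apply/eqP.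
have /(row_free_inj freeA) : (\row_i c i - delta_mx 0 k) *m A = 0 *m A.
  rewrite mulmxBl mulmx_sum_row -rowE -comb mul0mx; apply/eqP; rewrite subr_eq0.
  by apply/eqP/eq_bigr => i _; rewrite mxE.
by move/rowP/(_ k); rewrite !mxE !eqxx.
Qed.

Lemma map_mx_rmorph_intr {R S : pzRingType} (f : {rmorphism R -> S}) {m n : nat}
    (M : 'M[int]_(m, n)) :
  map_mx f (map_mx intr M) = map_mx intr M.
Proof. by rewrite -map_mx_comp; apply/matrixP => i j; rewrite !mxE /= rmorph_int. Qed.

Lemma row_free_int_rows (F : numFieldType) {r d : nat} {a : 'I_r -> 'rV[int]_d} :
  (forall c : 'I_r -> rat,
      \sum_i c i *: map_mx (fun z : int => z%:~R) (a i) = 0 -> forall i, c i = 0) ->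
  row_free (map_mx intr (\matrix_i a i) : 'M[F]_(r, d)).
Proof.
move=> indep.
rewrite -(map_mx_rmorph_intr (@ratr F)) row_free_map; apply: row_free_indep => c.
by under eq_bigr do rewrite -map_row rowK; apply: indep.
Qed.

Theorem lemma3p4 (R : rcfType) (r d d1 : nat) (s : 'I_r -> nat)
    (a : 'I_r -> 'rV[int]_d)
    (b : {i : 'I_r & 'I_(s i)} -> 'rV[int]_d1)
    (w : {i : 'I_r & 'I_(s i)} -> R)
    (beta : {i : 'I_r & 'I_(s i)} -> ratfun R d1) :
  (* A = {a^1, ..., a^r} is linearly independent (over Q) *)
  (forall c : 'I_r -> rat,
      \sum_i c i *: map_mx (fun z : int => z%:~R) (a i) = 0 -> forall i, c i = 0) ->
  (* some omega in Q^d with omega . a^i = 1 for all i *)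
  (exists omega : 'rV[rat]_d,
      forall i, \sum_(k < d) omega 0 k * (a i 0 k)%:~R = 1) ->
  (* B = {b^i_j} is a point configuration (injectively indexed) *)
  injective b ->
  (* a linear map pi_1 : Z^{d1} -> Z^d with pi_1(b^i_j) = a^i *)
  (exists pi1 : 'M[int]_(d1, d), forall i (j : 'I_(s i)), b (existT _ i j) *m pi1 = a i) ->
  (* positive weights *)
  (forall t, 0 < w t) ->
  (* (B, w) has rational linear precision with blending functions beta *)
  has_RLP b w beta ->
  forall (i : 'I_r) (p : 'rV[R]_d1),
    in_conv (fun j : 'I_(s i) => intpt R (b (existT _ i j))) p ->
    exists v : 'I_(s i) -> R[i],
      (forall j, rf_value (beta (existT _ i j)) (realpt p) (v j)) /\
      \sum_j v j = 1.
Proof.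
move=> indep _ _ [pi1 b_pi1] _ [_ _ _ _ precision] i p p_in_Pi.
have [v [v_val v_bary]] := precision p (in_conv_comp p_in_Pi).
exists (fun j => v (existT _ i j)); split => //.
have pi1_p : p *m map_mx intr pi1 = intpt R (a i).
  by apply: (in_conv_mulmx p_in_Pi) => j; rewrite -map_mxM b_pi1.
have p_bary : \sum_x v x *: map_mx intr (b x) = map_mx (real_complex R) p.
  apply/rowP => k; rewrite summxE mxE -[RHS]/(realpt p k) -v_bary.
  by apply: eq_bigr => x _; rewrite !mxE.
apply: (row_free_coef_eq1 (c := fun i' => \sum_(j < s i') v (existT _ i' j)) (k := i)
                          (row_free_int_rows R[i] indep)).
rewrite -map_row rowK.
under eq_bigr do rewrite -map_row rowK scaler_suml.
rewrite (sig_big_dep (fun _ => true) (fun _ _ => true)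
           (fun i' (j : 'I_(s i')) => v (existT _ i' j) *: map_mx intr (a i'))) /=.
rewrite (eq_bigr (fun x => (v x *: map_mx intr (b x)) *m map_mx intr pi1)); last first.
  by case=> i' j _; rewrite /= -scalemxAl -map_mxM b_pi1.
rewrite -mulmx_suml p_bary -(map_mx_rmorph_intr (real_complex R) pi1) -map_mxM pi1_p.
exact: (map_mx_rmorph_intr (real_complex R)).
Qed.
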